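(* Let $H_1,\dots,H_k$ and $F$ be fixed graphs. Then, as $n\to\infty$, $\mathrm{ex}(n,(H_1,\dots,H_k),F)=\Theta(\max_{i\le k}\mathrm{ex}(n,H_i,F))$ and $\mathrm{ex}^{\mathrm{col}}(n,(H_1,\dots,H_k),F)=\Theta(\max_{i\le k}\mathrm{ex}(n,H_i,F))$.
   Context: For graphs $H,G$, $\mathcal N(H,G)$ denotes the number of (not necessarily induced) subgraphs of $G$ isomorphic to $H$. $\mathrm{ex}(n,H,F)$ is the maximum of $\mathcal N(H,G)$ over all $F$-free graphs $G$ on $n$ vertices. $\mathrm{ex}(n,(H_1,\dots,H_k),F)$ is the maximum of $\sum_{i=1}^k\mathcal N(H_i,G)$ over all $F$-free graphs $G$ on $n$ vertices. For a graph $G$ whose edges are colored with colors $1,\dots,k$, let $G_i$ be the subgraph consisting of the edges of color $i$; $\mathrm{ex}^{\mathrm{col}}(n,(H_1,\dots,H_k),F)$ is the maximum of $\sum_{i=1}^k \mathcal N(H_i,G_i)$ over all $F$-free graphs $G$ on $n$ vertices and all colorings of their edges with colors $1,\dots,k$. *)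

From HB Require Import structures.
From mathcomp Require Import all_boot all_order all_algebra.
Set Implicit Arguments. Unset Strict Implicit. Unset Printing Implicit Defensive.
Import Order.TTheory GRing.Theory Num.Theory.

(* A (finite simple) graph on a finite vertex type T is given by its edge set:
   a set of 2-element subsets of T. A "fixed graph" H has vertex set 'I_h. *)
Definition is_graph (T : finType) (E : {set {set T}}) : bool :=
  [forall e in E, #|e| == 2].

Definition iso_to (T : finType) (h : nat) (EH : {set {set 'I_h}})
    (S : {set T}) (E : {set {set T}}) : bool :=
  [exists f : {ffun 'I_h -> T},
     [&& injectiveb f, f @: setT == S & E == [set (f @: (e : {set 'I_h})) | e in EH]]].

(* N(H, G): number of (not necessarily induced) subgraphs (S, E) of G
   (E a subset of the edges of G) isomorphic to H. *)
Definition count_sub (T : finType) (h : nat) (EH : {set {set 'I_h}})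
    (G : {set {set T}}) : nat :=
  #|[set p : {set T} * {set {set T}} | (p.2 \subset G) && iso_to EH p.1 p.2]|.

Definition Ffree (T : finType) (f : nat) (EF : {set {set 'I_f}})
    (G : {set {set T}}) : bool := count_sub EF G == 0.

Definition ex (n h f : nat) (EH : {set {set 'I_h}}) (EF : {set {set 'I_f}}) : nat :=
  \max_(G : {set {set 'I_n}} | is_graph G && Ffree EF G) count_sub EH G.

Definition ex_multi (n k : nat) (hs : 'I_k -> nat)
    (EH : forall i : 'I_k, {set {set 'I_(hs i)}})
    (f : nat) (EF : {set {set 'I_f}}) : nat :=
  \max_(G : {set {set 'I_n}} | is_graph G && Ffree EF G)
     \sum_(i < k) count_sub (EH i) G.

Definition ex_col (n k : nat) (hs : 'I_k -> nat)
    (EH : forall i : 'I_k, {set {set 'I_(hs i)}})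
    (f : nat) (EF : {set {set 'I_f}}) : nat :=
  \max_(G : {set {set 'I_n}} | is_graph G && Ffree EF G)
   \max_(c : {ffun {set 'I_n} -> 'I_k})
     \sum_(i < k) count_sub (EH i) [set e in G | c e == i].

Definition max_ex (n k : nat) (hs : 'I_k -> nat)
    (EH : forall i : 'I_k, {set {set 'I_(hs i)}})
    (f : nat) (EF : {set {set 'I_f}}) : nat :=
  \max_(i < k) ex n (EH i) EF.

Definition bigTheta (u v : nat -> nat) : Prop :=
  exists (c C : rat) (N : nat), (0 < c)%R /\ (0 < C)%R /\
    forall n, (N <= n)%N ->
      (c * (v n)%:R <= (u n)%:R)%R /\ ((u n)%:R <= C * (v n)%:R)%R.

From mathcomp Require Import all_boot all_order all_algebra.
Import Order.TTheory GRing.Theory Num.Theory.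
Set Implicit Arguments. Unset Strict Implicit. Unset Printing Implicit Defensive.

(* For every n, max_i ex(n,H_i,F) <= ex(n,(H_i),F) <= k max_i ex(n,H_i,F), and
   likewise for ex^col. Below: an extremal F-free graph for a single H_i (all
   edges coloured i) already attains ex(n,H_i,F). Above: each summand counts
   copies of H_i in a subgraph of an F-free graph G, hence at most in G, hence
   at most ex(n,H_i,F). *)

Lemma count_sub_subset (T : finType) h (EH : {set {set 'I_h}})
    (G1 G2 : {set {set T}}) :
  G1 \subset G2 -> count_sub EH G1 <= count_sub EH G2.
Proof.
move=> sG12; apply/subset_leq_card/subsetP => p; rewrite !inE.
by case/andP=> sG1 ->; rewrite (subset_trans sG1 sG12).
Qed.

Lemma count_sub_le_ex n h f (EH : {set {set 'I_h}}) (EF : {set {set 'I_f}})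
    (G : {set {set 'I_n}}) :
  is_graph G && Ffree EF G -> count_sub EH G <= ex n EH EF.
Proof. by move=> admG; rewrite /ex (bigD1 G) //= leq_maxl. Qed.

Lemma colour_class_subset (T : finType) k (G : {set {set T}})
    (c : {ffun {set T} -> 'I_k}) (i : 'I_k) :
  [set e in G | c e == i] \subset G.
Proof. by apply/subsetP => e; rewrite inE => /andP[]. Qed.

Lemma colour_class_const (T : finType) k (G : {set {set T}}) (i : 'I_k) :
  [set e in G | [ffun=> i] e == i] = G.
Proof. by apply/setP => e; rewrite inE ffunE eqxx andbT. Qed.

Section ExtremalBounds.
Variables (k : nat) (hs : 'I_k -> nat).
Variables (EH : forall i : 'I_k, {set {set 'I_(hs i)}}) (f : nat).
Variables (EF : {set {set 'I_f}}) (n : nat).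

Lemma ex_le_max_ex i : ex n (EH i) EF <= max_ex n EH EF.
Proof. by rewrite /max_ex (bigD1 i) //= leq_maxl. Qed.

Lemma sum_count_sub_le (G : {set {set 'I_n}}) (Gs : 'I_k -> {set {set 'I_n}}) :
  is_graph G && Ffree EF G -> (forall i, Gs i \subset G) ->
  \sum_(i < k) count_sub (EH i) (Gs i) <= k * max_ex n EH EF.
Proof.
move=> admG sGsG; rewrite -[k in k * _]card_ord -sum_nat_const.
apply: leq_sum => i _; apply: leq_trans _ (ex_le_max_ex i).
exact: leq_trans (count_sub_subset (EH i) (sGsG i)) (count_sub_le_ex _ admG).
Qed.

Lemma max_ex_le_ex_multi : max_ex n EH EF <= ex_multi n EH EF.
Proof.
apply/bigmax_leqP => i _; apply/bigmax_leqP => G admG.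
rewrite /ex_multi (bigD1 G) //=; apply: leq_trans (leq_maxl _ _).
by rewrite (bigD1 i) //= leq_addr.
Qed.

Lemma ex_multi_le_max_ex : ex_multi n EH EF <= k * max_ex n EH EF.
Proof.
apply/bigmax_leqP => G admG.
by apply: sum_count_sub_le admG _ => i; apply: subxx.
Qed.

Lemma max_ex_le_ex_col : max_ex n EH EF <= ex_col n EH EF.
Proof.
apply/bigmax_leqP => i _; apply/bigmax_leqP => G admG.
rewrite /ex_col (bigD1 G) //=; apply: leq_trans (leq_maxl _ _).
rewrite (bigD1 [ffun=> i]) //=; apply: leq_trans (leq_maxl _ _).
by rewrite (bigD1 i) //= colour_class_const leq_addr.
Qed.

Lemma ex_col_le_max_ex : ex_col n EH EF <= k * max_ex n EH EF.
Proof.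
apply/bigmax_leqP => G admG; apply/bigmax_leqP => c _.
exact: sum_count_sub_le admG (colour_class_subset G c).
Qed.

End ExtremalBounds.

Lemma bigTheta_sandwich (u v : nat -> nat) (K : nat) :
  (forall n, v n <= u n) -> (forall n, u n <= K * v n) -> bigTheta u v.
Proof.
move=> lo hi; exists 1%R, K.+1%:R%R, 0; do 2![split; first by rewrite ?ltr0n].
move=> n _; rewrite mul1r -natrM !ler_nat lo.
by split=> //; apply: leq_trans (hi n) (leq_mul (leqnSn K) (leqnn _)).
Qed.

Theorem mainTheorem2 (k : nat) (hs : 'I_k -> nat)
    (EH : forall i : 'I_k, {set {set 'I_(hs i)}})
    (f : nat) (EF : {set {set 'I_f}}) :
  (forall i : 'I_k, is_graph (EH i)) -> is_graph EF ->
  bigTheta (fun n => ex_multi n EH EF) (fun n => max_ex n EH EF) /\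
  bigTheta (fun n => ex_col n EH EF) (fun n => max_ex n EH EF).
Proof.
move=> _ _; split; apply: (@bigTheta_sandwich _ _ k) => n.
- exact: max_ex_le_ex_multi.
- exact: ex_multi_le_max_ex.
- exact: max_ex_le_ex_col.
- exact: ex_col_le_max_ex.
Qed.
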